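(* Let $F(z)=\sum_{k=0}^\infty b_k z^k\in\mathcal{B}$ with $b_1=a\in(0,1)$, and let $0<r\le 1/\sqrt3$. Then \[ \sum_{k=2}^\infty k|b_k|^2r^{2k}\le \frac{3(9-4a^2)^2}{64a^4}\left(-\log\Big(1-\frac{4a^2r^2}{3}\Big)-\frac{4a^2r^2}{3}\right). \]
   Context: $\mathbb{D}$ denotes the open unit disc. $\mathcal{B}$ is the class of functions $F$ analytic in $\mathbb{D}$ satisfying $|F'(z)|\le \frac{1}{1-|z|^2}$ for all $z\in\mathbb{D}$. For $F\in\mathcal{B}$ we write its Taylor expansion as $F(z)=\sum_{k=0}^\infty b_k z^k$. *)

From Stdlib Require Import Reals.
Open Scope R_scope.

Definition Cx : Type := (R * R)%type.
Definition Cmul (z w : Cx) : Cx :=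
  (fst z * fst w - snd z * snd w, fst z * snd w + snd z * fst w).
Fixpoint Cpow (z : Cx) (n : nat) : Cx :=
  match n with O => (1, 0) | S m => Cmul z (Cpow z m) end.
Definition Cnorm (z : Cx) : R := sqrt (fst z ^ 2 + snd z ^ 2).
Definition RtoC (x : R) : Cx := (x, 0).

Definition Cseries_cv (s : nat -> Cx) (l : Cx) : Prop :=
  Un_cv (fun N => sum_f_R0 (fun k => fst (s k)) N) (fst l) /\
  Un_cv (fun N => sum_f_R0 (fun k => snd (s k)) N) (snd l).

(* F(z) = sum_k b k z^k is analytic in the unit disc (the Taylor series
   converges on D), and its derivative F'(z) = sum_k (k+1) b_(k+1) z^k
   satisfies |F'(z)| <= 1/(1-|z|^2) on D. *)
Definition in_class_B (b : nat -> Cx) : Prop :=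
  (forall z : Cx, Cnorm z < 1 ->
     exists l : Cx, Cseries_cv (fun k => Cmul (b k) (Cpow z k)) l) /\
  (forall z : Cx, Cnorm z < 1 ->
     exists l : Cx,
       Cseries_cv (fun k => Cmul (RtoC (INR (S k))) (Cmul (b (S k)) (Cpow z k))) l
       /\ Cnorm l <= 1 / (1 - Cnorm z ^ 2)).

(* Write g = F' = sum_n c_n z^n with c_n = (n+1) b_(n+1).  Since |g(z)| <= 3/2
   on |z| <= 1/sqrt 3, the function w(z) = (2/3) g(z/sqrt 3) maps the unit disc
   into the closed unit disc with w(0) = alpha := 2a/3.  Writing w = alpha + z V,
   the Schwarz lemma applied to (w - alpha)/(1 - alpha w) gives
   |V(z)| <= |1 - alpha w(z)|, and Parseval's identity on the circle |z| = rho
   turns this into  sum_(n>=1) |d_n|^2 rho^(2n) (1 - alpha^2 rho^2)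
                    <= rho^2 (1 - alpha^2)^2,  where w = sum_n d_n z^n.
   Rescaled, this bounds t * d/dt of the left-hand side of the corollary by
   t * d/dt of its right-hand side, and the mean value theorem integrates it.

   Since F is only given through its Taylor series, all complex analysis is
   done on polynomials (finite truncations) and limits are taken at the end. *)

From Pilot Require Import Defs.
From Stdlib Require Import Reals Lra Lia Psatz Arith.
From Coquelicot Require Import Coquelicot.
Open Scope R_scope.

Fixpoint csum (f : nat -> C) (n : nat) : C :=
  match n with O => RtoC 0 | S k => (csum f k + f k)%C end.
Fixpoint rsum (f : nat -> R) (n : nat) : R :=
  match n with O => 0 | S k => rsum f k + f k end.

Lemma csum_ext f g n : (forall k, (k < n)%nat -> f k = g k) -> csum f n = csum g n.
Proof. induction n; intros H; simpl; auto. rewrite IHn, H; auto. Qed.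

Lemma rsum_ext f g n : (forall k, (k < n)%nat -> f k = g k) -> rsum f n = rsum g n.
Proof. induction n; intros H; simpl; auto. rewrite IHn, H; auto. Qed.

Lemma csum_plus f g n : csum (fun k => f k + g k)%C n = (csum f n + csum g n)%C.
Proof. induction n; simpl. - ring. - rewrite IHn. ring. Qed.

Lemma csum_scal c f n : (c * csum f n)%C = csum (fun k => c * f k)%C n.
Proof. induction n; simpl. - ring. - rewrite <- IHn. ring. Qed.

Lemma csum_zero n : csum (fun _ => RtoC 0) n = RtoC 0.
Proof. induction n; simpl; auto. rewrite IHn. ring. Qed.

Lemma csum_const c n : csum (fun _ => c) n = (INR n * c)%C.
Proof. induction n; simpl csum. - simpl. ring. - rewrite IHn, S_INR, RtoC_plus. ring. Qed.

Lemma csum_swap (f : nat -> nat -> C) n m :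
  csum (fun i => csum (fun j => f i j) m) n = csum (fun j => csum (fun i => f i j) n) m.
Proof. induction n; simpl. - now rewrite csum_zero. - now rewrite IHn, <- csum_plus. Qed.

Lemma csum_mul f g n m :
  (csum f n * csum g m)%C = csum (fun i => csum (fun j => f i * g j) m)%C n.
Proof. induction n; simpl csum. - simpl. ring. - rewrite Cmult_plus_distr_r, IHn, csum_scal. ring. Qed.

Lemma csum_conj f n : Cconj (csum f n) = csum (fun k => Cconj (f k)) n.
Proof.
  induction n; simpl. - apply injective_projections; simpl; ring.
  - now rewrite Cplus_conj, IHn.
Qed.

Lemma csum_fst f n : fst (csum f n) = rsum (fun k => fst (f k)) n.
Proof. induction n; simpl; auto. now rewrite IHn. Qed.

Lemma csum_snd f n : snd (csum f n) = rsum (fun k => snd (f k)) n.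
Proof. induction n; simpl; auto. now rewrite IHn. Qed.

Lemma csum_S_l f n : csum f (S n) = (f 0%nat + csum (fun k => f (S k)) n)%C.
Proof. induction n; simpl in *. - ring. - rewrite IHn. ring. Qed.

Lemma csum_kron (x : nat -> C) n i : (i < n)%nat ->
  csum (fun j => if Nat.eq_dec i j then x j else RtoC 0) n = x i.
Proof.
  induction n; intros Hi; [lia|]. simpl. destruct (Nat.eq_dec i n) as [->|Hne].
  - rewrite (csum_ext _ (fun _ => RtoC 0)), csum_zero; [ring|].
    intros k Hk. destruct (Nat.eq_dec n k); [lia|auto].
  - rewrite IHn by lia. ring.
Qed.

Lemma csum_geom z n : ((1 - z) * csum (fun j => z ^ j) n = 1 - z ^ n)%C.
Proof. induction n; simpl csum. - simpl. ring. - rewrite Cmult_plus_distr_l, IHn. simpl. ring. Qed.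

Lemma csum_Cmod f n : Cmod (csum f n) <= rsum (fun k => Cmod (f k)) n.
Proof.
  induction n; simpl. - rewrite Cmod_0; lra.
  - eapply Rle_trans; [apply Cmod_triangle|lra].
Qed.

Lemma rsum_le f g n : (forall k, (k < n)%nat -> f k <= g k) -> rsum f n <= rsum g n.
Proof.
  induction n; intros H; simpl; [lra|].
  assert (f n <= g n) by auto. assert (rsum f n <= rsum g n) by auto. lra.
Qed.

Lemma rsum_const c n : rsum (fun _ => c) n = INR n * c.
Proof. induction n; simpl rsum. - simpl; ring. - rewrite IHn, S_INR. ring. Qed.

Lemma rsum_nonneg f n : (forall k, (k < n)%nat -> 0 <= f k) -> 0 <= rsum f n.
Proof. intros H. rewrite <- (Rmult_0_r (INR n)), <- rsum_const. now apply rsum_le. Qed.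

Lemma rsum_mono f n m : (n <= m)%nat -> (forall k, 0 <= f k) -> rsum f n <= rsum f m.
Proof. intros Hle Hf. induction Hle; simpl; [lra|]. specialize (Hf m). lra. Qed.

Lemma rsum_scal c f n : c * rsum f n = rsum (fun k => c * f k) n.
Proof. induction n; simpl. - ring. - rewrite <- IHn. ring. Qed.

Lemma rsum_S_l f n : rsum f (S n) = f 0%nat + rsum (fun k => f (S k)) n.
Proof. induction n; simpl in *. - ring. - rewrite IHn. ring. Qed.

Lemma rsum_f_R0 f n : rsum f (S n) = sum_f_R0 f n.
Proof. induction n; simpl in *. - ring. - rewrite <- IHn. ring. Qed.

Lemma rsum_term_le f n k : (k < n)%nat -> (forall i, 0 <= f i) -> f k <= rsum f n.
Proof.
  intros Hk Hf. apply Rle_trans with (rsum f (S k)).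
  - simpl. pose proof (rsum_nonneg f k (fun i _ => Hf i)). lra.
  - apply rsum_mono; auto.
Qed.

Lemma geom_bound x n : 0 <= x < 1 -> rsum (fun k => x ^ k) n <= 1 / (1 - x).
Proof.
  intros Hx. assert (Hid : rsum (fun k => x ^ k) n * (1 - x) = 1 - x ^ n).
  { induction n; simpl rsum; [simpl; ring|]. rewrite Rmult_plus_distr_r, IHn. simpl. ring. }
  assert (0 <= x ^ n) by (apply pow_le; lra).
  apply Rmult_le_reg_r with (1 - x); [lra|]. rewrite Hid. field_simplify; lra.
Qed.

Lemma Cmod_sub_tri a b c : Cmod (a - c) <= Cmod (a - b) + Cmod (b - c).
Proof. replace (a - c)%C with ((a - b) + (b - c))%C by ring. apply Cmod_triangle. Qed.

Lemma Cmod_le_sub a b : Cmod a <= Cmod b + Cmod (a - b).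
Proof. replace a with (b + (a - b))%C at 1 by ring. apply Cmod_triangle. Qed.

Lemma Cmod_sub_sym a b : Cmod (a - b) = Cmod (b - a).
Proof. replace (a - b)%C with (- (b - a))%C by ring. apply Cmod_opp. Qed.

Lemma Cmod_one_minus y : 1 - Cmod y <= Cmod (1 - y).
Proof. pose proof (Cmod_le_sub 1 y). rewrite Cmod_1 in H. lra. Qed.

Lemma Cmod_le_abs z : Cmod z <= Rabs (fst z) + Rabs (snd z).
Proof.
  pose proof (Rabs_pos (fst z)). pose proof (Rabs_pos (snd z)).
  unfold Cmod. rewrite <- (sqrt_pow2 (Rabs (fst z) + Rabs (snd z))) by lra.
  apply sqrt_le_1_alt. rewrite <- (pow2_abs (fst z)), <- (pow2_abs (snd z)). nra.
Qed.

Lemma Cpow_mul a b n : ((a * b) ^ n = a ^ n * b ^ n)%C.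
Proof. induction n; simpl. - ring. - rewrite IHn. ring. Qed.

Lemma Cmult_eq0 a b : (a * b)%C = RtoC 0 -> a <> RtoC 0 -> b = RtoC 0.
Proof.
  intros H Ha. apply Cmod_eq_0. apply Cmod_gt_0 in Ha.
  assert (Cmod (a * b) = 0) by (rewrite H; apply Cmod_0). rewrite Cmod_mult in H0. nra.
Qed.

Definition evalp (p : nat -> C) (n : nat) (z : C) : C := csum (fun k => p k * z ^ k)%C n.

Definition IsPoly (f : C -> C) : Prop := exists n p, forall z, f z = evalp p n z.

Lemma evalp_bound p n z :
  Cmod z <= 1 -> Cmod (evalp p n z) <= rsum (fun k => Cmod (p k)) n.
Proof.
  intros Hz. eapply Rle_trans; [apply csum_Cmod|]. apply rsum_le. intros k _.
  rewrite Cmod_mult, Cmod_pow. pose proof (Cmod_ge_0 (p k)).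
  assert (Cmod z ^ k <= 1) by (rewrite <- (pow1 k); apply pow_incr; pose proof (Cmod_ge_0 z); lra).
  nra.
Qed.

Lemma evalp_S_l p n z :
  evalp p (S n) z = (p 0%nat + z * evalp (fun k => p (S k)) n z)%C.
Proof.
  unfold evalp. rewrite csum_S_l, csum_scal. simpl. f_equal; [ring|].
  apply csum_ext. intros k _. simpl. ring.
Qed.

Lemma evalp_split p L m z :
  evalp p (L + m) z = (evalp p L z + csum (fun k => p (L + k)%nat * z ^ (L + k)) m)%C.
Proof.
  induction m; unfold evalp in *. - rewrite Nat.add_0_r. simpl. ring.
  - rewrite Nat.add_succ_r. simpl csum. rewrite IHm. ring.
Qed.

Lemma evalp_add p q n z :
  evalp (fun i => p i + q i)%C n z = (evalp p n z + evalp q n z)%C.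
Proof. unfold evalp. rewrite <- csum_plus. apply csum_ext. intros; ring. Qed.

Lemma evalp_scal c p n z : (c * evalp p n z)%C = evalp (fun k => c * p k)%C n z.
Proof. unfold evalp. rewrite csum_scal. apply csum_ext. intros; ring. Qed.

Lemma evalp_scale p n (rho : R) z :
  evalp p n (RtoC rho * z)%C = evalp (fun k => p k * RtoC (rho ^ k))%C n z.
Proof. unfold evalp. apply csum_ext. intros k _. rewrite Cpow_mul, <- RtoC_pow. ring. Qed.

Lemma evalp_pad p n k z : (n <= k)%nat ->
  evalp (fun i => if lt_dec i n then p i else RtoC 0) k z = evalp p n z.
Proof.
  intros H. induction H; unfold evalp in *.
  - apply csum_ext. intros i Hi. destruct (lt_dec i n); [auto|lia].
  - simpl. rewrite IHle. destruct (lt_dec m n); [lia|ring].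
Qed.

Lemma IsPoly_ext f g : (forall z, f z = g z) -> IsPoly f -> IsPoly g.
Proof. intros H [n [p Hp]]. exists n, p. intros z. now rewrite <- H. Qed.

Lemma IsPoly_evalp p n : IsPoly (evalp p n).
Proof. now exists n, p. Qed.

Lemma IsPoly_const c : IsPoly (fun _ => c).
Proof. exists 1%nat, (fun _ => c). intros z. unfold evalp. simpl. ring. Qed.

Lemma IsPoly_add f g : IsPoly f -> IsPoly g -> IsPoly (fun z => f z + g z)%C.
Proof.
  intros [n [p Hp]] [m [q Hq]]. exists (max n m).
  exists (fun i => (if lt_dec i n then p i else RtoC 0) + (if lt_dec i m then q i else RtoC 0))%C.
  intros z. rewrite evalp_add, !evalp_pad, Hp, Hq by lia. reflexivity.
Qed.

Lemma IsPoly_scal c f : IsPoly f -> IsPoly (fun z => c * f z)%C.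
Proof. intros [n [p Hp]]. exists n, (fun i => c * p i)%C. intros z. now rewrite Hp, evalp_scal. Qed.

Lemma IsPoly_mulz f : IsPoly f -> IsPoly (fun z => z * f z)%C.
Proof.
  intros [n [p Hp]]. exists (S n), (fun i => match i with O => RtoC 0 | S j => p j end).
  intros z. rewrite evalp_S_l, Hp. change (evalp (fun k => p k) n z) with (evalp p n z). ring.
Qed.

Lemma IsPoly_mul f g : IsPoly f -> IsPoly g -> IsPoly (fun z => f z * g z)%C.
Proof.
  intros Hf [m [q Hq]]. apply (IsPoly_ext (fun z => f z * evalp q m z)%C); [intros; now rewrite Hq|].
  clear Hq. revert q. induction m; intros q.
  - apply (IsPoly_ext (fun _ => RtoC 0)); [intros; unfold evalp; simpl; ring|apply IsPoly_const].
  - apply (IsPoly_ext (fun z => q 0%nat * f z + z * (f z * evalp (fun k => q (S k)) m z))%C).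
    { intros z. rewrite evalp_S_l. ring. }
    apply IsPoly_add; [now apply IsPoly_scal|apply IsPoly_mulz, IHm].
Qed.

Lemma IsPoly_pow f m : IsPoly f -> IsPoly (fun z => f z ^ m)%C.
Proof. intros Hf. induction m; simpl; [apply IsPoly_const|now apply IsPoly_mul]. Qed.

Lemma IsPoly_csum (F : nat -> C -> C) J :
  (forall k, IsPoly (F k)) -> IsPoly (fun z => csum (fun k => F k z) J).
Proof. intros H. induction J; simpl; [apply IsPoly_const|now apply IsPoly_add]. Qed.

(** * Uniform polynomial approximation on the closed unit disc *)

(* [Uc f]: f is a uniform limit of polynomials on the closed unit disc.  This
   is the class of functions to which the maximum principle is applied. *)
Definition Uc (f : C -> C) : Prop := forall eps, 0 < eps -> exists P, IsPoly P /\
  forall z, Cmod z <= 1 -> Cmod (f z - P z) <= eps.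

Lemma IsPoly_bounded P :
  IsPoly P -> exists B, 0 <= B /\ forall z, Cmod z <= 1 -> Cmod (P z) <= B.
Proof.
  intros [n [p Hp]]. exists (rsum (fun k => Cmod (p k)) n). split.
  - apply rsum_nonneg; intros; apply Cmod_ge_0.
  - intros z Hz. rewrite Hp. now apply evalp_bound.
Qed.

Lemma Uc_bounded f : Uc f -> exists B, 0 <= B /\ forall z, Cmod z <= 1 -> Cmod (f z) <= B.
Proof.
  intros H. destruct (H 1 Rlt_0_1) as [P [HP HfP]].
  destruct (IsPoly_bounded P HP) as [B [HB0 HB]]. exists (B + 1). split; [lra|].
  intros z Hz. pose proof (Cmod_le_sub (f z) (P z)). specialize (HB z Hz). specialize (HfP z Hz). lra.
Qed.

Lemma Uc_poly f : IsPoly f -> Uc f.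
Proof.
  intros H eps Heps. exists f. split; auto. intros z _.
  replace (f z - f z)%C with (RtoC 0) by ring. rewrite Cmod_0. lra.
Qed.

Lemma Uc_const c : Uc (fun _ => c).
Proof. apply Uc_poly, IsPoly_const. Qed.

Lemma Uc_ext f g : (forall z, Cmod z <= 1 -> f z = g z) -> Uc f -> Uc g.
Proof.
  intros H Hf eps Heps. destruct (Hf eps Heps) as [P [HP HfP]]. exists P; split; auto.
  intros z Hz. rewrite <- H; auto.
Qed.

Lemma Uc_limit f :
  (forall eps, 0 < eps -> exists g, Uc g /\ forall z, Cmod z <= 1 -> Cmod (f z - g z) <= eps) ->
  Uc f.
Proof.
  intros H eps Heps. destruct (H (eps/2)) as [g [Hg Hfg]]; [lra|].
  destruct (Hg (eps/2)) as [P [HP HgP]]; [lra|]. exists P. split; auto. intros z Hz.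
  eapply Rle_trans; [apply (Cmod_sub_tri _ (g z))|]. specialize (Hfg z Hz). specialize (HgP z Hz). lra.
Qed.

Lemma Uc_mul f g : Uc f -> Uc g -> Uc (fun z => f z * g z)%C.
Proof.
  intros Hf Hg eps Heps.
  destruct (Uc_bounded f Hf) as [Bf [HBf0 HBf]]. destruct (Uc_bounded g Hg) as [Bg [HBg0 HBg]].
  (* approximate f within e1 and g within e2, where Bf e2 + (Bg + 1) e1 <= eps *)
  set (e1 := eps / (2 * (Bg + 1))). set (e2 := Rmin 1 (eps / (2 * (Bf + 1)))).
  assert (He1 : 0 < e1) by (apply Rdiv_lt_0_compat; lra).
  assert (He2 : 0 < e2) by (apply Rmin_glb_lt; [lra|apply Rdiv_lt_0_compat; lra]).
  assert (Hf2 : Bf * e2 <= eps / 2).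
  { apply Rle_trans with ((Bf + 1) * (eps / (2 * (Bf + 1)))); [|right; field; lra].
    apply Rmult_le_compat; try lra; apply Rmin_r. }
  assert (Hg1 : (Bg + 1) * e1 = eps / 2) by (unfold e1; field; lra).
  destruct (Hf e1 He1) as [P [HP HfP]]. destruct (Hg e2 He2) as [Q [HQ HgQ]].
  exists (fun z => P z * Q z)%C. split; [now apply IsPoly_mul|]. intros z Hz.
  specialize (HfP z Hz). specialize (HgQ z Hz). specialize (HBf z Hz). specialize (HBg z Hz).
  replace (f z * g z - P z * Q z)%C with (f z * (g z - Q z) + Q z * (f z - P z))%C by ring.
  eapply Rle_trans; [apply Cmod_triangle|]. rewrite !Cmod_mult.
  assert (HQb : Cmod (Q z) <= Bg + 1).
  { pose proof (Cmod_le_sub (Q z) (g z)). rewrite Cmod_sub_sym in H.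
    pose proof (Rmin_l 1 (eps / (2 * (Bf + 1)))). fold e2 in H0. lra. }
  pose proof (Cmod_ge_0 (f z)). pose proof (Cmod_ge_0 (Q z)).
  pose proof (Cmod_ge_0 (g z - Q z)). pose proof (Cmod_ge_0 (f z - P z)).
  assert (Cmod (f z) * Cmod (g z - Q z) <= Bf * e2) by (apply Rmult_le_compat; lra).
  assert (Cmod (Q z) * Cmod (f z - P z) <= (Bg + 1) * e1) by (apply Rmult_le_compat; lra).
  lra.
Qed.

Lemma Uc_pow f m : Uc f -> Uc (fun z => f z ^ m)%C.
Proof.
  intros Hf. induction m; [exact (Uc_const (RtoC 1))|].
  apply (Uc_ext (fun z => f z * f z ^ m)%C); [reflexivity|]. now apply Uc_mul.
Qed.

(* If |a Om| <= 1 - m0 < 1 on the closed disc, then 1 / (1 - a Om) is the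
   uniform limit of the partial sums of the geometric series in a Om. *)
Lemma Uc_inv_geom (Om : C -> C) a m0 : IsPoly Om -> 0 < m0 -> 0 <= a ->
  (forall z, Cmod z <= 1 -> a * Cmod (Om z) <= 1 - m0) ->
  Uc (fun z => / (1 - RtoC a * Om z))%C.
Proof.
  intros HP Hm0 Ha Hb. apply Uc_limit. intros eps Heps.
  assert (Hm1 : 0 <= 1 - m0).
  { specialize (Hb 0 ltac:(rewrite Cmod_0; lra)). pose proof (Cmod_ge_0 (Om 0)).
    pose proof (Rmult_le_pos a _ Ha H). lra. }
  destruct (pow_lt_1_zero (1 - m0) ltac:(rewrite Rabs_pos_eq; lra) (eps * m0)) as [J HJ];
    [apply Rmult_lt_0_compat; lra|].
  exists (fun z => csum (fun k => (RtoC a * Om z) ^ k) J)%C. split.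
  { apply Uc_poly, IsPoly_csum. intros k. now apply IsPoly_pow, IsPoly_scal. }
  intros z Hz. set (x := (RtoC a * Om z)%C).
  assert (Hx : Cmod x <= 1 - m0) by (unfold x; rewrite Cmod_mult, Cmod_R, Rabs_pos_eq; auto).
  assert (H1x : m0 <= Cmod (1 - x)) by (pose proof (Cmod_one_minus x); lra).
  assert (Hnz : (1 - x)%C <> RtoC 0) by (intros Habs; rewrite Habs, Cmod_0 in H1x; lra).
  replace (/ (1 - x) - csum (fun k => x ^ k) J)%C with (x ^ J / (1 - x))%C.
  2:{ pose proof (csum_geom x J) as HG.
      replace (csum (fun k => x ^ k)%C J) with (/ (1 - x) * (1 - x ^ J))%C by (rewrite <- HG; field; auto).
      field; auto. }
  rewrite Cmod_div, Cmod_pow by auto. specialize (HJ J (le_n _)).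
  rewrite Rabs_pos_eq in HJ by (apply pow_le; lra).
  assert (Cmod x ^ J <= (1 - m0) ^ J) by (apply pow_incr; split; [apply Cmod_ge_0|auto]).
  apply Rmult_le_reg_r with (Cmod (1 - x)); [lra|]. unfold Rdiv. rewrite Rmult_assoc, Rinv_l by lra.
  assert (eps * m0 <= eps * Cmod (1 - x)) by (apply Rmult_le_compat_l; lra). lra.
Qed.

(** * Roots of unity and Parseval's identity *)

Definition ex (x : R) : C := (cos x, sin x).

Lemma ex_mul x y : (ex x * ex y)%C = ex (x + y).
Proof. unfold ex. rewrite cos_plus, sin_plus. apply injective_projections; simpl; ring. Qed.

Lemma ex_pow x n : (ex x ^ n)%C = ex (INR n * x).
Proof.
  induction n; simpl (ex x ^ _)%C.
  - unfold ex. now rewrite Rmult_0_l, cos_0, sin_0.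
  - rewrite IHn, ex_mul, S_INR. f_equal. ring.
Qed.

Lemma ex_conj x : Cconj (ex x) = ex (- x).
Proof. unfold ex, Cconj. now rewrite cos_neg, sin_neg. Qed.

Lemma Cmod_ex x : Cmod (ex x) = 1.
Proof.
  unfold Cmod, ex. simpl. pose proof (sin2_cos2 x). unfold Rsqr in H.
  replace (cos x * (cos x * 1) + sin x * (sin x * 1)) with 1 by lra. apply sqrt_1.
Qed.

Lemma ex_ne_1 x : 0 < x < 2 * PI -> ex x <> RtoC 1.
Proof.
  intros Hx Heq. unfold ex in Heq. injection Heq as H1 H2.
  destruct (Rtotal_order x PI) as [Hlt|[->|Hgt]].
  - pose proof (sin_gt_0 x). lra.
  - rewrite cos_PI in H1. lra.
  - pose proof (sin_lt_0 x). lra.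
Qed.

Definition mu (M j : nat) : C := ex (2 * PI * INR j / INR M).

Lemma Cmod_mu M j : Cmod (mu M j) = 1.
Proof. apply Cmod_ex. Qed.

Lemma orth_lt M n m : (m < n < M)%nat ->
  csum (fun j => (mu M j ^ n) * Cconj (mu M j ^ m))%C M = RtoC 0.
Proof.
  intros H. assert (HM : 0 < INR M) by (apply lt_0_INR; lia).
  set (x := 2 * PI * INR (n - m) / INR M).
  rewrite (csum_ext _ (fun j => ex x ^ j)%C).
  2:{ intros j _. unfold mu. rewrite !ex_pow, ex_conj, ex_mul. f_equal.
      unfold x. rewrite minus_INR by lia. field. lra. }
  assert (Hz : ex x <> RtoC 1).
  { apply ex_ne_1. unfold x. pose proof PI_RGT_0.
    assert (0 < INR (n - m)) by (apply lt_0_INR; lia).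
    assert (INR (n - m) < INR M) by (apply lt_INR; lia). split.
    - apply Rdiv_lt_0_compat; nra.
    - apply Rmult_lt_reg_r with (INR M); auto. field_simplify; nra. }
  apply (Cmult_eq0 (1 - ex x)).
  - rewrite csum_geom, ex_pow. unfold x.
    replace (INR M * (2 * PI * INR (n - m) / INR M)) with (0 + 2 * INR (n - m) * PI) by (field; lra).
    unfold ex. rewrite cos_period, sin_period, cos_0, sin_0. apply injective_projections; simpl; ring.
  - intros Habs. apply Hz. replace (ex x) with (1 - (1 - ex x))%C by ring. rewrite Habs. ring.
Qed.

Lemma orth M n m : (n < M)%nat -> (m < M)%nat ->
  csum (fun j => (mu M j ^ n) * Cconj (mu M j ^ m))%C M =
  if Nat.eq_dec n m then RtoC (INR M) else RtoC 0.
Proof.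
  intros Hn Hm. destruct (Nat.eq_dec n m) as [<-|Hne].
  - rewrite (csum_ext _ (fun _ => RtoC 1)), csum_const; [ring|].
    intros j _. unfold mu. rewrite ex_pow, ex_conj, ex_mul, Rplus_opp_r. unfold ex.
    now rewrite cos_0, sin_0.
  - destruct (Nat.lt_total m n) as [Hlt|[Heq|Hgt]]; [now apply orth_lt|lia|].
    rewrite (csum_ext _ (fun j => Cconj ((mu M j ^ m) * Cconj (mu M j ^ n)))%C).
    + rewrite <- csum_conj, orth_lt by lia. apply injective_projections; simpl; ring.
    + intros j _. rewrite Cmult_conj, Cconj_conj. ring.
Qed.

Lemma Cmod2_fst c : Cmod c ^ 2 = fst (c * Cconj c)%C.
Proof. now rewrite <- Cmod2_conj. Qed.

Lemma parseval M p n : (0 < M)%nat -> (n <= M)%nat ->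
  INR M * rsum (fun k => Cmod (p k) ^ 2) n = rsum (fun j => Cmod (evalp p n (mu M j)) ^ 2) M.
Proof.
  intros HM Hn.
  rewrite (rsum_ext (fun j => Cmod (evalp p n (mu M j)) ^ 2)
                    (fun j => fst (evalp p n (mu M j) * Cconj (evalp p n (mu M j)))%C))
    by (intros; apply Cmod2_fst).
  rewrite <- csum_fst. unfold evalp.
  rewrite (csum_ext _ (fun j => csum (fun a => csum (fun b =>
             p a * Cconj (p b) * ((mu M j ^ a) * Cconj (mu M j ^ b))) n) n))%C.
  2:{ intros j _. rewrite csum_conj, csum_mul. apply csum_ext. intros a _.
      apply csum_ext. intros b _. rewrite Cmult_conj. ring. }
  rewrite csum_swap, (csum_ext _ (fun a => p a * Cconj (p a) * INR M))%C.
  - rewrite csum_fst, rsum_scal. apply rsum_ext. intros a _. rewrite Cmod2_fst. simpl. ring.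
  - intros a Ha. rewrite csum_swap.
    rewrite (csum_ext _ (fun b => if Nat.eq_dec a b then p b * Cconj (p b) * INR M else RtoC 0))%C.
    + now apply csum_kron.
    + intros b Hb. rewrite <- csum_scal, orth by lia. destruct (Nat.eq_dec a b) as [<-|]; ring.
Qed.

(** * The maximum principle *)

Lemma le_epsilon_slack x y c : 0 <= c -> (forall eps, 0 < eps -> x <= y + c * eps) -> x <= y.
Proof.
  intros Hc H. destruct (Rle_dec x y) as [|Hxy]; auto. exfalso.
  set (eps := (x - y) / (2 * (c + 1))).
  assert (Heps : 0 < eps) by (apply Rdiv_lt_0_compat; lra).
  specialize (H eps Heps).
  assert (c * eps <= (c + 1) * eps) by nra.
  assert ((c + 1) * eps = (x - y) / 2) by (unfold eps; field; lra). lra.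
Qed.

(* Cauchy's estimate, via Parseval: a polynomial bounded by K on the unit
   circle has all its coefficients bounded by K. *)
Lemma coef_bound p n K : (forall z, Cmod z = 1 -> Cmod (evalp p n z) <= K) ->
  forall k, (k < n)%nat -> Cmod (p k) <= K.
Proof.
  intros H k Hk.
  assert (HK : 0 <= K) by (specialize (H (mu n 0) (Cmod_mu _ _)); pose proof (Cmod_ge_0 (evalp p n (mu n 0))); lra).
  assert (Hn : 0 < INR n) by (apply lt_0_INR; lia).
  assert (Hsum : INR n * rsum (fun i => Cmod (p i) ^ 2) n <= INR n * K ^ 2).
  { rewrite parseval, <- rsum_const by lia. apply rsum_le. intros j _.
    specialize (H (mu n j) (Cmod_mu _ _)). apply pow_incr.
    split; [apply Cmod_ge_0|auto]. }
  assert (Cmod (p k) ^ 2 <= K ^ 2).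
  { eapply Rle_trans; [apply (rsum_term_le (fun i => Cmod (p i) ^ 2) n); auto|nra].
    intros; apply pow2_ge_0. }
  pose proof (Cmod_ge_0 (p k)). nra.
Qed.

Lemma poly_inner p n K l : (forall z, Cmod z = 1 -> Cmod (evalp p n z) <= K) ->
  Cmod l < 1 -> Cmod (evalp p n l) <= K / (1 - Cmod l).
Proof.
  intros H Hl. pose proof (coef_bound p n K H) as Hc. pose proof (Cmod_ge_0 l).
  assert (HK : 0 <= K)
    by (specialize (H (mu 1 0) (Cmod_mu _ _)); pose proof (Cmod_ge_0 (evalp p n (mu 1 0))); lra).
  eapply Rle_trans; [apply csum_Cmod|].
  apply Rle_trans with (rsum (fun k => K * Cmod l ^ k) n).
  - apply rsum_le. intros k Hk. rewrite Cmod_mult, Cmod_pow.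
    apply Rmult_le_compat_r; [apply pow_le; lra|auto].
  - rewrite <- rsum_scal. unfold Rdiv. rewrite <- (Rmult_1_l (/ (1 - Cmod l))).
    apply Rmult_le_compat_l; auto. apply geom_bound. lra.
Qed.

Lemma Uc_inner f K : Uc f -> (forall z, Cmod z = 1 -> Cmod (f z) <= K) ->
  forall l, Cmod l < 1 -> Cmod (f l) <= K / (1 - Cmod l).
Proof.
  intros Hf HK l Hl. pose proof (Cmod_ge_0 l).
  apply (le_epsilon_slack _ _ (1 + 1 / (1 - Cmod l))).
  { apply Rplus_le_le_0_compat; [lra|]. apply Rlt_le, Rdiv_lt_0_compat; lra. }
  intros eps Heps. destruct (Hf eps Heps) as [P [[n [p Hp]] HfP]].
  assert (HPb : Cmod (P l) <= (K + eps) / (1 - Cmod l)).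
  { rewrite Hp. apply poly_inner; auto. intros z Hz. rewrite <- Hp.
    pose proof (Cmod_le_sub (P z) (f z)). rewrite Cmod_sub_sym in H0.
    specialize (HfP z ltac:(lra)). specialize (HK z Hz). lra. }
  pose proof (Cmod_le_sub (f l) (P l)). specialize (HfP l ltac:(lra)).
  replace ((K + eps) / (1 - Cmod l)) with (K / (1 - Cmod l) + 1 / (1 - Cmod l) * eps) in HPb
    by (field; lra).
  lra.
Qed.

(* A nonnegative real whose powers are bounded is at most 1 (Bernoulli). *)
Lemma pow_bounded_le1 x C0 : 0 <= x -> (forall m, x ^ m <= C0) -> x <= 1.
Proof.
  intros Hx H. destruct (Rle_dec x 1) as [|Hx1]; auto. exfalso.
  assert (Hb : forall m, 1 + INR m * (x - 1) <= x ^ m).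
  { induction m; [simpl; lra|].
    rewrite S_INR. simpl pow. pose proof (pos_INR m).
    assert (x * (1 + INR m * (x - 1)) <= x * x ^ m) by (apply Rmult_le_compat_l; lra).
    assert (0 <= INR m * (x - 1) * (x - 1)) by (apply Rmult_le_pos; [apply Rmult_le_pos|]; lra).
    lra. }
  destruct (INR_archimed (x - 1) C0) as [m Hm]; [lra|].
  specialize (Hb m). specialize (H m). lra.
Qed.

Lemma maxprin f : Uc f -> (forall z, Cmod z = 1 -> Cmod (f z) <= 1) ->
  forall l, Cmod l < 1 -> Cmod (f l) <= 1.
Proof.
  intros Hf H l Hl. apply (pow_bounded_le1 _ (1 / (1 - Cmod l))); [apply Cmod_ge_0|].
  intros m. rewrite <- Cmod_pow. apply (Uc_inner (fun z => f z ^ m)%C 1); auto.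
  - now apply Uc_pow.
  - intros z Hz. rewrite Cmod_pow, <- (pow1 m). apply pow_incr. split; [apply Cmod_ge_0|auto].
Qed.

(** * The truncated Schwarz-Parseval estimate *)

(* |x - a|^2 = |1 - a x|^2 + (1 - a^2)(|x|^2 - 1) for real a: the identity
   behind the disc automorphism x |-> (x - a) / (1 - a x). *)
Lemma mobius_id x a :
  Cmod (x - RtoC a) ^ 2 = Cmod (1 - RtoC a * x) ^ 2 + (1 - a ^ 2) * (Cmod x ^ 2 - 1).
Proof. rewrite !Cmod2_alt. unfold Re, Im. simpl. ring. Qed.

Lemma schwarz_circle_pointwise (x v z : C) a ep m0 :
  0 < a < 1 -> 0 <= ep <= 1 -> 0 < m0 -> Cmod z = 1 -> x = (RtoC a + z * v)%C ->
  Cmod x <= 1 + ep -> m0 <= Cmod (1 - RtoC a * x) ->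
  Cmod v ^ 2 <= (1 + 3 * ep / m0 ^ 2) * Cmod (1 - RtoC a * x) ^ 2.
Proof.
  intros Ha Hep Hm0 Hz -> Hx Hw.
  replace (Cmod v) with (Cmod (RtoC a + z * v - RtoC a)).
  2:{ replace (RtoC a + z * v - RtoC a)%C with (z * v)%C by ring. rewrite Cmod_mult, Hz. ring. }
  rewrite mobius_id. set (w := Cmod (1 - RtoC a * (RtoC a + z * v))) in *.
  pose proof (Cmod_ge_0 (RtoC a + z * v)). set (s := Cmod (RtoC a + z * v)) in *.
  assert (Hs : s ^ 2 - 1 <= 3 * ep).
  { assert (s * s <= (1 + ep) * (1 + ep)) by (apply Rmult_le_compat; lra). nra. }
  assert (Hgrowth : (1 - a ^ 2) * (s ^ 2 - 1) <= 3 * ep).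
  { assert (0 <= 1 - a ^ 2 <= 1) by nra. destruct (Rle_dec 0 (s ^ 2 - 1)); [|nra].
    apply Rle_trans with (1 * (s ^ 2 - 1)); [apply Rmult_le_compat_r; lra|lra]. }
  assert (Hw2 : m0 ^ 2 <= w ^ 2) by (apply pow_incr; lra).
  assert (3 * ep <= 3 * ep / m0 ^ 2 * w ^ 2).
  { apply Rle_trans with (3 * ep / m0 ^ 2 * m0 ^ 2); [right; field; lra|].
    apply Rmult_le_compat_l; auto. apply Rdiv_le_0_compat; nra. }
  lra.
Qed.

(* Schwarz's inequality inside the disc, by the maximum principle applied to
   V^2 / (1 - a Om)^2 (a uniform limit of polynomials, since a |Om| < 1). *)
Lemma schwarz_disc (Om V : C -> C) a m0 K2 :
  IsPoly Om -> IsPoly V -> 0 <= a -> 0 < m0 -> 0 < K2 ->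
  (forall z, Cmod z <= 1 -> a * Cmod (Om z) <= 1 - m0) ->
  (forall z, Cmod z = 1 -> Cmod (V z) ^ 2 <= K2 * Cmod (1 - RtoC a * Om z) ^ 2) ->
  forall z, Cmod z < 1 -> Cmod (V z) ^ 2 <= K2 * Cmod (1 - RtoC a * Om z) ^ 2.
Proof.
  intros HOm HV Ha Hm0 HK2 Hsmall Hcirc.
  assert (Hlow : forall z, Cmod z <= 1 -> m0 <= Cmod (1 - RtoC a * Om z)).
  { intros z Hz. pose proof (Cmod_one_minus (RtoC a * Om z)).
    rewrite Cmod_mult, Cmod_R, Rabs_pos_eq in H by lra. specialize (Hsmall z Hz). lra. }
  set (Q := fun z => (V z * / (1 - RtoC a * Om z))%C).
  assert (HQ : forall z, Cmod z <= 1 ->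
    Cmod (Q z * Q z * RtoC (/ K2)) = Cmod (V z) ^ 2 / (K2 * Cmod (1 - RtoC a * Om z) ^ 2)).
  { intros z Hz. specialize (Hlow z Hz). unfold Q.
    assert ((1 - RtoC a * Om z)%C <> RtoC 0) by (intros E; rewrite E, Cmod_0 in Hlow; lra).
    rewrite !Cmod_mult, Cmod_inv, Cmod_R, Rabs_pos_eq by (auto; apply Rlt_le, Rinv_0_lt_compat; lra).
    field. split; lra. }
  assert (HUc : Uc (fun z => Q z * Q z * RtoC (/ K2))%C).
  { assert (Uc Q) by (apply Uc_mul; [now apply Uc_poly|now apply (Uc_inv_geom Om a m0)]).
    apply Uc_mul; [now apply Uc_mul|apply Uc_const]. }
  intros z Hz. pose proof (Hlow z ltac:(lra)) as Hlowz.
  assert (Hpos : 0 < K2 * Cmod (1 - RtoC a * Om z) ^ 2) by (apply Rmult_lt_0_compat; nra).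
  assert (Hmax : Cmod (Q z * Q z * RtoC (/ K2)) <= 1).
  { apply (maxprin (fun u => Q u * Q u * RtoC (/ K2))%C); auto. intros u Hu. rewrite HQ by lra.
    specialize (Hlow u ltac:(lra)). specialize (Hcirc u Hu).
    apply Rmult_le_reg_r with (K2 * Cmod (1 - RtoC a * Om u) ^ 2); [apply Rmult_lt_0_compat; nra|].
    field_simplify; nra. }
  rewrite HQ in Hmax by lra.
  apply Rmult_le_reg_r with (/ (K2 * Cmod (1 - RtoC a * Om z) ^ 2)); [now apply Rinv_0_lt_compat|].
  rewrite Rinv_r by lra. exact Hmax.
Qed.

Definition with_const (c : C) (q : nat -> C) (k : nat) : C :=
  match k with O => c | S j => q (S j) end.

Lemma evalp_with_const c q n u :
  evalp (with_const c q) (S n) u = (c + evalp q (S n) u - q 0%nat)%C.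
Proof. rewrite !evalp_S_l. simpl. ring. Qed.

(* [energy d rho n] = sum_(k=1..n) |d_k|^2 rho^(2k), the mean of |w - w(0)|^2
   over the circle of radius rho, for w the polynomial with coefficients d. *)
Definition energy (d : nat -> C) (rho : R) (n : nat) : R :=
  rsum (fun k => Cmod (d (S k)) ^ 2 * rho ^ (2 * S k)) n.

Lemma energy_nonneg d rho n : 0 <= energy d rho n.
Proof.
  apply rsum_nonneg. intros k _. apply Rmult_le_pos; [apply pow2_ge_0|].
  rewrite pow_mult. apply pow_le, pow2_ge_0.
Qed.

Lemma energy_mono d rho n m : (n <= m)%nat -> energy d rho n <= energy d rho m.
Proof.
  intros H. apply rsum_mono; auto. intros k. apply Rmult_le_pos; [apply pow2_ge_0|].
  rewrite pow_mult. apply pow_le, pow2_ge_0.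
Qed.

(* Parseval on the circle |z| = rho turns the pointwise Schwarz inequality
   |w - a|^2 <= rho^2 K2 |1 - a w|^2 into an inequality between energies:
   the coefficients of 1 - a w are 1 - a^2 and -a d_k (k >= 1). *)
Lemma parseval_schwarz (d : nat -> C) a L' rho K2 :
  d 0%nat = RtoC a -> 0 <= rho ->
  (forall z, Cmod z = rho -> Cmod (evalp d (S L') z - RtoC a) ^ 2
                             <= rho ^ 2 * K2 * Cmod (1 - RtoC a * evalp d (S L') z) ^ 2) ->
  energy d rho L' <= rho ^ 2 * K2 * ((1 - a ^ 2) ^ 2 + a ^ 2 * energy d rho L').
Proof.
  intros Hd0 Hrho Hpt.
  set (e := fun k => (d k * RtoC (rho ^ k))%C).
  assert (He : forall u, evalp e (S L') u = evalp d (S L') (RtoC rho * u)).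
  { intros u. now rewrite evalp_scale. }
  assert (He0 : e 0%nat = RtoC a) by (unfold e; rewrite Hd0; simpl; ring).
  set (p1 := with_const (RtoC 0) e).
  set (p2 := with_const (RtoC (1 - a ^ 2)) (fun k => - RtoC a * e k)%C).
  assert (HP1 : forall u, evalp p1 (S L') u = (evalp d (S L') (RtoC rho * u) - RtoC a)%C).
  { intros u. unfold p1. rewrite evalp_with_const, He0, He. ring. }
  assert (HP2 : forall u, evalp p2 (S L') u = (1 - RtoC a * evalp d (S L') (RtoC rho * u))%C).
  { intros u. unfold p2. rewrite evalp_with_const, He0, <- evalp_scal, He, RtoC_minus, RtoC_pow.
    ring. }
  assert (Hsum : rsum (fun k => Cmod (p1 k) ^ 2) (S L')
                 <= rho ^ 2 * K2 * rsum (fun k => Cmod (p2 k) ^ 2) (S L')).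
  { apply Rmult_le_reg_l with (INR (S L')); [apply lt_0_INR; lia|].
    replace (INR (S L') * (rho ^ 2 * K2 * rsum (fun k => Cmod (p2 k) ^ 2) (S L')))
      with (rho ^ 2 * K2 * (INR (S L') * rsum (fun k => Cmod (p2 k) ^ 2) (S L'))) by ring.
    rewrite !parseval, rsum_scal by lia. apply rsum_le. intros j _. rewrite HP1, HP2. apply Hpt.
    rewrite Cmod_mult, Cmod_mu, Cmod_R, Rabs_pos_eq; lra. }
  assert (Hnorm : forall k, Cmod (e (S k)) ^ 2 = Cmod (d (S k)) ^ 2 * rho ^ (2 * S k)).
  { intros k. unfold e. rewrite Cmod_mult, Cmod_R, Rabs_pos_eq by (apply pow_le; lra).
    rewrite Rpow_mult_distr, <- pow_mult, Nat.mul_comm. reflexivity. }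
  rewrite !rsum_S_l in Hsum. unfold p1, p2, with_const in Hsum. cbv beta iota in Hsum.
  rewrite Cmod_0, Cmod_R, pow2_abs in Hsum.
  rewrite (rsum_ext (fun k => Cmod (- RtoC a * e (S k)) ^ 2)
                    (fun k => a ^ 2 * (Cmod (d (S k)) ^ 2 * rho ^ (2 * S k)))) in Hsum.
  2:{ intros k _. rewrite Cmod_mult, Cmod_opp, Cmod_R, Rpow_mult_distr, pow2_abs, Hnorm. ring. }
  rewrite (rsum_ext (fun k => Cmod (e (S k)) ^ 2) (fun k => Cmod (d (S k)) ^ 2 * rho ^ (2 * S k)))
    in Hsum by (intros; apply Hnorm).
  unfold energy. rewrite <- rsum_scal in Hsum. lra.
Qed.

(* The Schwarz-Parseval estimate for one truncation w = sum_(k<=L') d_k z^k,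
   assuming |w| <= 1 + ep on the closed disc; the error appears in the factor
   K2 = 1 + 3 ep / m0^2, where m0 = (1 - a)/2 bounds |1 - a w| from below. *)
Lemma schwarz_parseval_trunc (d : nat -> C) a L' ep rho :
  0 < a <= 2/3 -> d 0%nat = RtoC a -> 0 <= ep <= ((1 - a) / 2) ^ 2 / 3 -> 0 < rho < 1 ->
  (forall z, Cmod z <= 1 -> Cmod (evalp d (S L') z) <= 1 + ep) ->
  energy d rho L'
  <= rho ^ 2 * (1 + 3 * ep / ((1 - a) / 2) ^ 2) * ((1 - a ^ 2) ^ 2 + a ^ 2 * energy d rho L').
Proof.
  intros Ha Hd0 Hep Hrho Hbd. set (m0 := (1 - a) / 2) in *.
  assert (Hm0 : 1/6 <= m0 <= 1/2) by (unfold m0; lra).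
  set (K2 := 1 + 3 * ep / m0 ^ 2).
  assert (HK2 : 1 <= K2) by (unfold K2; assert (0 <= 3 * ep / m0 ^ 2) by (apply Rdiv_le_0_compat; nra); lra).
  set (Om := evalp d (S L')) in *. set (V := evalp (fun k => d (S k)) L').
  assert (HOm : forall z, Om z = (RtoC a + z * V z)%C) by (intros z; unfold Om; now rewrite evalp_S_l, Hd0).
  assert (Hsmall : forall z, Cmod z <= 1 -> a * Cmod (Om z) <= 1 - m0).
  { intros z Hz. specialize (Hbd z Hz).
    assert (a * Cmod (Om z) <= a * (1 + ep)) by (apply Rmult_le_compat_l; lra).
    assert (a * ep <= m0) by nra. unfold m0 in *. lra. }
  assert (Hlow : forall z, Cmod z <= 1 -> m0 <= Cmod (1 - RtoC a * Om z)).
  { intros z Hz. pose proof (Cmod_one_minus (RtoC a * Om z)).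
    rewrite Cmod_mult, Cmod_R, Rabs_pos_eq in H by lra. specialize (Hsmall z Hz). lra. }
  assert (Hdisc : forall z, Cmod z < 1 -> Cmod (V z) ^ 2 <= K2 * Cmod (1 - RtoC a * Om z) ^ 2).
  { apply (schwarz_disc Om V a m0); try lra; try apply IsPoly_evalp; auto.
    intros z Hz. apply (schwarz_circle_pointwise (Om z) (V z) z a ep m0); auto; try lra.
    - nra.
    - apply Hbd; lra.
    - apply Hlow; lra. }
  apply parseval_schwarz; auto; [lra|]. intros z Hz. change (evalp d (S L')) with Om.
  replace (Om z - RtoC a)%C with (z * V z)%C by (rewrite HOm; ring).
  rewrite Cmod_mult, Hz, Rpow_mult_distr, Rmult_assoc. apply Rmult_le_compat_l; [nra|].
  apply Hdisc. lra.
Qed.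

Lemma schwarz_parseval (d : nat -> C) (a : R) (E : nat -> R) :
  0 < a <= 2/3 -> d 0%nat = RtoC a ->
  (forall L z, Cmod z <= 1 -> Cmod (evalp d L z) <= 1 + E L) ->
  (forall L, 0 <= E L) ->
  (forall eps, 0 < eps -> exists L0, forall L, (L0 <= L)%nat -> E L <= eps) ->
  forall rho, 0 < rho < 1 -> forall N,
  energy d rho N * (1 - a ^ 2 * rho ^ 2) <= rho ^ 2 * (1 - a ^ 2) ^ 2.
Proof.
  intros Ha Hd0 Hbd HE0 HElim rho Hrho N.
  set (m0 := (1 - a) / 2). assert (Hm0 : 1/6 <= m0 <= 1/2) by (unfold m0; lra).
  pose proof (energy_nonneg d rho N) as HX. set (X := energy d rho N) in *.
  apply (le_epsilon_slack _ _ (3 * (1 + X) / m0 ^ 2)); [apply Rdiv_le_0_compat; nra|].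
  intros eps Heps.
  destruct (HElim (Rmin (m0 ^ 2 / 3) eps)) as [L0 HL0]; [apply Rmin_glb_lt; nra|].
  set (L' := (L0 + N)%nat). set (ep := E (S L')).
  assert (Hep : ep <= Rmin (m0 ^ 2 / 3) eps) by (apply HL0; unfold L'; lia).
  pose proof (Rmin_l (m0 ^ 2 / 3) eps). pose proof (Rmin_r (m0 ^ 2 / 3) eps).
  pose proof (HE0 (S L')) as Hep0. fold ep in Hep0.
  pose proof (schwarz_parseval_trunc d a L' ep rho Ha Hd0 ltac:(fold m0; lra) Hrho (Hbd (S L'))) as Htr.
  fold m0 in Htr. set (K2 := 1 + 3 * ep / m0 ^ 2) in *.
  assert (HK2 : K2 - 1 = 3 / m0 ^ 2 * ep) by (unfold K2; field; lra).
  assert (Hc : 0 < 3 / m0 ^ 2) by (apply Rdiv_lt_0_compat; nra).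
  assert (HK2eps : K2 - 1 <= 3 / m0 ^ 2 * eps) by (rewrite HK2; apply Rmult_le_compat_l; lra).
  assert (HK2b : 0 <= K2 - 1 <= 1).
  { rewrite HK2. split; [nra|]. apply Rmult_le_reg_l with (m0 ^ 2 / 3); [nra|]. field_simplify; nra. }
  set (A := energy d rho L') in *.
  assert (HXA : X <= A) by (apply energy_mono; unfold L'; lia).
  assert (Hr2 : 0 < rho ^ 2 < 1) by (split; nra).
  assert (Ha2 : 0 < a ^ 2 <= 4/9) by nra.
  assert (Hb2 : 0 <= (1 - a ^ 2) ^ 2 <= 1) by nra.
  (* X (1 - rho^2 K2 a^2) <= A (1 - rho^2 K2 a^2) <= rho^2 K2 (1 - a^2)^2 *)
  assert (Hpos : 0 <= 1 - rho ^ 2 * K2 * a ^ 2).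
  { assert (rho ^ 2 * K2 * a ^ 2 <= 1 * 2 * (4/9)) by (apply Rmult_le_compat; try nra). lra. }
  assert (HXK : X * (1 - rho ^ 2 * K2 * a ^ 2) <= rho ^ 2 * K2 * (1 - a ^ 2) ^ 2).
  { apply Rle_trans with (A * (1 - rho ^ 2 * K2 * a ^ 2)); [apply Rmult_le_compat_r; lra|nra]. }
  assert (Herr : (K2 - 1) * (rho ^ 2 * (1 - a ^ 2) ^ 2 + rho ^ 2 * a ^ 2 * X) <= (K2 - 1) * (1 + X)).
  { apply Rmult_le_compat_l; [lra|]. assert (rho ^ 2 * a ^ 2 <= 1) by nra. nra. }
  assert ((K2 - 1) * (1 + X) <= 3 / m0 ^ 2 * eps * (1 + X)) by (apply Rmult_le_compat_r; lra).
  replace (3 * (1 + X) / m0 ^ 2 * eps) with (3 / m0 ^ 2 * eps * (1 + X)) by (field; lra).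
  nra.
Qed.

(** * Functions of class B *)

(* The Taylor coefficients c_n = (n+1) b_(n+1) of the derivative F'. *)
Definition cc (b : nat -> Cx) (n : nat) : C := (RtoC (INR (S n)) * b (S n))%C.

Lemma Cpow_eq z n : Defs.Cpow z n = (z ^ n)%C.
Proof. induction n; simpl; auto. Qed.

Lemma deriv_term_eq b z k :
  Cmul (Defs.RtoC (INR (S k))) (Cmul (b (S k)) (Defs.Cpow z k)) = (cc b k * z ^ k)%C.
Proof.
  rewrite Cpow_eq. unfold cc.
  change (RtoC (INR (S k)) * (b (S k) * z ^ k) = RtoC (INR (S k)) * b (S k) * z ^ k)%C. ring.
Qed.

Lemma deriv_partial_sums b z N :
  sum_f_R0 (fun k => fst (Cmul (Defs.RtoC (INR (S k))) (Cmul (b (S k)) (Defs.Cpow z k)))) N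
    = fst (evalp (cc b) (S N) z) /\
  sum_f_R0 (fun k => snd (Cmul (Defs.RtoC (INR (S k))) (Cmul (b (S k)) (Defs.Cpow z k)))) N
    = snd (evalp (cc b) (S N) z).
Proof.
  unfold evalp. rewrite csum_fst, csum_snd, !rsum_f_R0.
  split; apply sum_eq; intros; now rewrite deriv_term_eq.
Qed.

Lemma series_terms_bounded (u : nat -> R) l :
  Un_cv (fun N => sum_f_R0 u N) l -> exists B, forall k, Rabs (u k) <= B.
Proof.
  intros H. destruct (H 1 Rlt_0_1) as [N0 HN0].
  exists (2 + rsum (fun i => Rabs (u i)) (S N0)). intros k.
  assert (0 <= rsum (fun i => Rabs (u i)) (S N0)) by (apply rsum_nonneg; intros; apply Rabs_pos).
  destruct (le_lt_dec k N0) as [Hk|Hk].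
  - pose proof (rsum_term_le (fun i => Rabs (u i)) (S N0) k ltac:(lia) (fun i => Rabs_pos _)). lra.
  - destruct k; [lia|]. pose proof (HN0 (S k) ltac:(lia)) as HA. pose proof (HN0 k ltac:(lia)) as HB.
    unfold R_dist in *. simpl in HA.
    replace (u (S k)) with ((sum_f_R0 u k + u (S k) - l) - (sum_f_R0 u k - l)) by ring.
    eapply Rle_trans; [apply Rabs_triang|]. rewrite Rabs_Ropp. lra.
Qed.

(* Convergence of the derivative series at z = 9/10 gives |c_n| <= B (10/9)^n. *)
Lemma deriv_coef_geom b :
  in_class_B b -> exists B, 0 <= B /\ forall n, Cmod (cc b n) <= B * (10/9) ^ n.
Proof.
  intros [_ Hder]. destruct (Hder (RtoC (9/10))) as [l [[Hf Hs] _]].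
  { change (Cmod (RtoC (9/10)) < 1). rewrite Cmod_R, Rabs_pos_eq; lra. }
  destruct (series_terms_bounded _ _ Hf) as [B1 HB1].
  destruct (series_terms_bounded _ _ Hs) as [B2 HB2].
  exists (B1 + B2). split.
  { specialize (HB1 0%nat). specialize (HB2 0%nat). pose proof (Rabs_pos (fst (cc b 0 * 1)%C)).
    pose proof (Rabs_pos (snd (cc b 0 * 1)%C)). rewrite deriv_term_eq in HB1, HB2. simpl in *. lra. }
  intros n. specialize (HB1 n). specialize (HB2 n). rewrite deriv_term_eq in HB1, HB2.
  change (Defs.RtoC (9/10)) with (RtoC (9/10)) in HB1, HB2.
  pose proof (Cmod_le_abs (cc b n * RtoC (9/10) ^ n)%C) as Habs.
  rewrite Cmod_mult, Cmod_pow, Cmod_R, Rabs_pos_eq in Habs by lra.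
  assert (0 < (9/10) ^ n) by (apply pow_lt; lra).
  assert (Hinv : (10/9) ^ n * (9/10) ^ n = 1) by (rewrite <- Rpow_mult_distr, <- (pow1 n); f_equal; field).
  apply Rmult_le_reg_r with ((9/10) ^ n); auto. rewrite Rmult_assoc, Hinv. lra.
Qed.

Lemma lim_close (S : nat -> C) l w E K0 :
  Un_cv (fun K => fst (S K)) (fst l) -> Un_cv (fun K => snd (S K)) (snd l) ->
  (forall K, (K0 <= K)%nat -> Cmod (S K - w) <= E) -> Cmod (l - w) <= E.
Proof.
  intros H1 H2 H3. apply (le_epsilon_slack _ _ 2); [lra|]. intros eps Heps.
  destruct (H1 eps Heps) as [N1 HN1]. destruct (H2 eps Heps) as [N2 HN2].
  set (K := (N1 + N2 + K0)%nat).
  specialize (HN1 K ltac:(lia)). specialize (HN2 K ltac:(lia)). specialize (H3 K ltac:(lia)).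
  unfold R_dist in *. pose proof (Cmod_le_abs (l - S K)%C). pose proof (Cmod_sub_tri l (S K) w).
  replace (fst (l - S K)%C) with (- (fst (S K) - fst l)) in H by (simpl; ring).
  replace (snd (l - S K)%C) with (- (snd (S K) - snd l)) in H by (simpl; ring).
  rewrite !Rabs_Ropp in H. lra.
Qed.

Lemma sqrt3_bounds : 5/3 < sqrt 3 < 2.
Proof.
  split; [rewrite <- (sqrt_pow2 (5/3)) by lra|rewrite <- (sqrt_pow2 2) by lra];
  apply sqrt_lt_1_alt; lra.
Qed.

Lemma inv_sqrt3_sqr : (1 / sqrt 3) ^ 2 = 1 / 3.
Proof.
  assert (0 < sqrt 3) by (apply sqrt_lt_R0; lra).
  replace ((1 / sqrt 3) ^ 2) with (1 / sqrt 3 ^ 2) by (field; lra). now rewrite pow2_sqrt by lra.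
Qed.

Lemma deriv_tail_bound b B L m z :
  0 <= B -> (forall n, Cmod (cc b n) <= B * (10/9) ^ n) -> Cmod z <= 3/5 ->
  Cmod (evalp (cc b) (L + m) z - evalp (cc b) L z) <= 3 * B * (2/3) ^ L.
Proof.
  intros HB0 HB Hz. pose proof (Cmod_ge_0 z).
  rewrite evalp_split. replace (evalp (cc b) L z + _ - evalp (cc b) L z)%C
    with (csum (fun k => cc b (L + k)%nat * z ^ (L + k)) m)%C by ring.
  eapply Rle_trans; [apply csum_Cmod|].
  apply Rle_trans with (rsum (fun k => B * (2/3) ^ L * (2/3) ^ k) m).
  - apply rsum_le. intros k _. rewrite Cmod_mult, Cmod_pow.
    apply Rle_trans with (B * (10/9) ^ (L + k) * (3/5) ^ (L + k)).
    + apply Rmult_le_compat; auto; [apply Cmod_ge_0|apply pow_le; auto|apply pow_incr; lra].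
    + rewrite Rmult_assoc, <- Rpow_mult_distr, pow_add. right.
      replace (10/9 * (3/5)) with (2/3) by field. ring.
  - rewrite <- rsum_scal. replace (3 * B * (2/3) ^ L) with (B * (2/3) ^ L * (1 / (1 - 2/3))) by field.
    apply Rmult_le_compat_l; [apply Rmult_le_pos; [auto|apply pow_le; lra]|].
    apply geom_bound. lra.
Qed.

(* Truncations of F' are bounded by 3/2 + O((2/3)^L) on |z| <= 1/sqrt 3,
   since |F'(z)| <= 1/(1 - |z|^2) <= 3/2 there. *)
Lemma deriv_trunc_bound b : in_class_B b -> exists B, 0 <= B /\
  forall L z, Cmod z <= 1 / sqrt 3 -> Cmod (evalp (cc b) L z) <= 3/2 + 3 * B * (2/3) ^ L.
Proof.
  intros Hb. destruct (deriv_coef_geom b Hb) as [B [HB0 HB]]. exists B. split; auto.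
  intros L z Hz. pose proof sqrt3_bounds. pose proof (Cmod_ge_0 z).
  assert (Hz1 : Cmod z <= 3/5).
  { eapply Rle_trans; [apply Hz|]. replace (3/5) with (1 / (5/3)) by field.
    apply Rmult_le_compat_l; [lra|]. apply Rinv_le_contravar; lra. }
  assert (Hz2 : Cmod z ^ 2 <= 1/3) by (rewrite <- inv_sqrt3_sqr; apply pow_incr; lra).
  destruct Hb as [_ Hder]. destruct (Hder z) as [l [[Hf Hs] Hl]]; [change (Cmod z < 1); lra|].
  change (Cmod l <= 1 / (1 - Cmod z ^ 2)) in Hl.
  assert (Hl2 : Cmod l <= 3/2).
  { eapply Rle_trans; [apply Hl|]. apply Rmult_le_reg_r with (1 - Cmod z ^ 2); [lra|].
    field_simplify; lra. }
  assert (Ht : Cmod (l - evalp (cc b) L z) <= 3 * B * (2/3) ^ L).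
  { apply (lim_close (fun K => evalp (cc b) (S K) z) _ _ _ L).
    - eapply Un_cv_ext; [|exact Hf]. intros; apply deriv_partial_sums.
    - eapply Un_cv_ext; [|exact Hs]. intros; apply deriv_partial_sums.
    - intros K HK. replace (S K) with (L + (S K - L))%nat by lia. now apply deriv_tail_bound. }
  pose proof (Cmod_le_sub (evalp (cc b) L z) l). rewrite Cmod_sub_sym in H1. lra.
Qed.

(** * The differential inequality *)

Lemma energy_rescale (c s : R) (q : nat -> C) rho N : 0 <= c -> 0 <= s ->
  energy (fun n => RtoC (c * s ^ n) * q n)%C rho N = c ^ 2 * energy q (s * rho) N.
Proof.
  intros Hc Hs. unfold energy. rewrite rsum_scal. apply rsum_ext. intros k _.
  rewrite Cmod_mult, Cmod_R, Rabs_pos_eq by (apply Rmult_le_pos; [auto|apply pow_le; auto]).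
  rewrite !pow_mult, !Rpow_mult_distr.
  replace ((s ^ 2) ^ S k) with ((s ^ S k) ^ 2) by (rewrite <- !pow_mult; f_equal; lia). ring.
Qed.

Lemma geometric_small (K q : R) : 0 <= K -> 0 <= q < 1 ->
  forall eps, 0 < eps -> exists L0, forall L, (L0 <= L)%nat -> K * q ^ L <= eps.
Proof.
  intros HK Hq eps Heps.
  destruct (pow_lt_1_zero q ltac:(rewrite Rabs_pos_eq; lra) (eps / (K + 1))) as [L0 HL0];
    [apply Rdiv_lt_0_compat; lra|].
  exists L0. intros L HL. specialize (HL0 L HL). rewrite Rabs_pos_eq in HL0 by (apply pow_le; lra).
  assert (0 <= q ^ L) by (apply pow_le; lra).
  apply Rle_trans with ((K + 1) * q ^ L); [nra|].
  apply Rmult_le_reg_r with (/ (K + 1)); [apply Rinv_0_lt_compat; lra|].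
  replace ((K + 1) * q ^ L * / (K + 1)) with (q ^ L) by (field; lra). lra.
Qed.

(* The Schwarz-Parseval estimate for w(z) = (2/3) F'(z / sqrt 3), with w(0) = 2a/3,
   rewritten in terms of the coefficients of F' at radius t = rho / sqrt 3. *)
Lemma main_bound b a : in_class_B b -> b 1%nat = Defs.RtoC a -> 0 < a < 1 ->
  forall t, 0 < t < 1 / sqrt 3 -> forall N,
  energy (cc b) t N * (1 - 4 * a ^ 2 * t ^ 2 / 3) <= 27 / 4 * t ^ 2 * ((9 - 4 * a ^ 2) / 9) ^ 2.
Proof.
  intros Hb Hb1 Ha t Ht N.
  destruct (deriv_trunc_bound b Hb) as [B [HB0 HB]].
  pose proof sqrt3_bounds. assert (Hs3 : sqrt 3 ^ 2 = 3) by (apply pow2_sqrt; lra).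
  set (s := / sqrt 3). assert (Hs0 : 0 < s) by (apply Rinv_0_lt_compat; lra).
  set (d := fun n => (RtoC (2/3 * s ^ n) * cc b n)%C).
  assert (Hd : forall L z, evalp d L z = (RtoC (2/3) * evalp (cc b) L (RtoC s * z))%C).
  { intros L z. rewrite evalp_scale, evalp_scal. unfold evalp. apply csum_ext. intros k _.
    unfold d. rewrite RtoC_mult. ring. }
  assert (Hd0 : d 0%nat = RtoC (2 * a / 3)).
  { unfold d, cc. simpl. rewrite Hb1. apply injective_projections; simpl; lra. }
  assert (Hbd : forall L z, Cmod z <= 1 -> Cmod (evalp d L z) <= 1 + 2 * B * (2/3) ^ L).
  { intros L z Hz. rewrite Hd, Cmod_mult, Cmod_R, Rabs_pos_eq by lra.
    assert (Hsz : Cmod (RtoC s * z) <= 1 / sqrt 3).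
    { rewrite Cmod_mult, Cmod_R, Rabs_pos_eq by lra. pose proof (Cmod_ge_0 z).
      unfold s. replace (1 / sqrt 3) with (/ sqrt 3 * 1) by (field; lra). apply Rmult_le_compat_l; lra. }
    specialize (HB L _ Hsz). lra. }
  assert (Hrho : 0 < sqrt 3 * t < 1).
  { split; [apply Rmult_lt_0_compat; lra|].
    replace 1 with (sqrt 3 * (1 / sqrt 3)) by (field; lra). apply Rmult_lt_compat_l; lra. }
  assert (HE0 : forall L, 0 <= 2 * B * (2/3) ^ L).
  { intros L. apply Rmult_le_pos; [lra|apply pow_le; lra]. }
  pose proof (schwarz_parseval d (2 * a / 3) (fun L => 2 * B * (2/3) ^ L) ltac:(lra) Hd0 Hbd HE0
    (geometric_small (2 * B) (2/3) ltac:(lra) ltac:(lra)) (sqrt 3 * t) Hrho N) as Hcore.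
  unfold d in Hcore. rewrite energy_rescale in Hcore by lra.
  replace (s * (sqrt 3 * t)) with t in Hcore by (unfold s; field; lra).
  replace ((2 * a / 3) ^ 2 * (sqrt 3 * t) ^ 2) with (4 * a ^ 2 * t ^ 2 / 3) in Hcore
    by (rewrite Rpow_mult_distr, Hs3; field).
  replace ((sqrt 3 * t) ^ 2) with (3 * t ^ 2) in Hcore by (rewrite Rpow_mult_distr, Hs3; ring).
  replace (1 - (2 * a / 3) ^ 2) with ((9 - 4 * a ^ 2) / 9) in Hcore by field.
  lra.
Qed.

(** * Integration *)

Lemma le_of_deriv_le (f g f' g' : R -> R) r :
  0 < r -> f 0 = g 0 ->
  (forall t, 0 <= t <= r -> derivable_pt_lim f t (f' t)) ->
  (forall t, 0 <= t <= r -> derivable_pt_lim g t (g' t)) ->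
  (forall t, 0 < t < r -> f' t <= g' t) -> f r <= g r.
Proof.
  intros Hr H0 Hf Hg Hle.
  destruct (MVT_cor2 (fun t => g t - f t) (fun t => g' t - f' t) 0 r Hr) as [c [Hmvt Hc]].
  - intros t Ht. apply derivable_pt_lim_minus; auto.
  - specialize (Hle c Hc). nra.
Qed.

Lemma deriv_poly_sum (c : nat -> R) (m : nat -> nat) N x :
  derivable_pt_lim (fun t => sum_f_R0 (fun k => c k * t ^ m k) N) x
    (sum_f_R0 (fun k => c k * (INR (m k) * x ^ pred (m k))) N).
Proof.
  induction N; simpl.
  - apply (derivable_pt_lim_scal (fun t => t ^ m 0%nat)), derivable_pt_lim_pow.
  - apply (derivable_pt_lim_plus (fun t => sum_f_R0 (fun k => c k * t ^ m k) N)
                                 (fun t => c (S N) * t ^ m (S N))); auto.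
    apply (derivable_pt_lim_scal (fun t => t ^ m (S N))), derivable_pt_lim_pow.
Qed.

Lemma deriv_log_majorant K0 a t : 1 - 4 * a ^ 2 * t ^ 2 / 3 > 0 ->
  derivable_pt_lim (fun t => K0 * (- ln (1 - 4 * a ^ 2 * t ^ 2 / 3) - 4 * a ^ 2 * t ^ 2 / 3)) t
    (K0 * (2 * (4 * a ^ 2 / 3) * t / (1 - 4 * a ^ 2 * t ^ 2 / 3) - 2 * (4 * a ^ 2 / 3) * t)).
Proof. intros H. apply is_derive_Reals. auto_derive; [lra|]. field. lra. Qed.

(* The derivative of the left-hand side of the corollary is 2 t energy(c, t), which
   main_bound dominates by the derivative of the right-hand side. *)
Lemma deriv_comparison b a t N :
  in_class_B b -> b 1%nat = Defs.RtoC a -> 0 < a < 1 -> 0 < t < 1 / sqrt 3 ->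
  sum_f_R0 (fun k => INR (k + 2) * Cnorm (b (k + 2)%nat) ^ 2
                     * (INR (2 * (k + 2)) * t ^ pred (2 * (k + 2)))) N
  <= 3 * (9 - 4 * a ^ 2) ^ 2 / (64 * a ^ 4)
     * (2 * (4 * a ^ 2 / 3) * t / (1 - 4 * a ^ 2 * t ^ 2 / 3) - 2 * (4 * a ^ 2 / 3) * t).
Proof.
  intros Hb Hb1 Ha Ht.
  assert (Hq : 0 < 1 - 4 * a ^ 2 * t ^ 2 / 3).
  { assert (t ^ 2 <= 1 / 3) by (rewrite <- inv_sqrt3_sqr; apply pow_incr; lra). nra. }
  assert (HLHS : sum_f_R0 (fun k => INR (k + 2) * Cnorm (b (k + 2)%nat) ^ 2
                              * (INR (2 * (k + 2)) * t ^ pred (2 * (k + 2)))) N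
                 = 2 * t * energy (cc b) t (S N)).
  { unfold energy. rewrite rsum_f_R0, scal_sum. apply sum_eq. intros k _. unfold cc.
    rewrite Cmod_mult, Cmod_R, Rabs_pos_eq by apply pos_INR.
    replace (k + 2)%nat with (S (S k)) by lia. change Cnorm with Cmod.
    replace (pred (2 * S (S k))) with (S (2 * S k)) by lia.
    rewrite mult_INR, <- (tech_pow_Rmult t). simpl (INR 2). ring. }
  pose proof (main_bound b a Hb Hb1 Ha t Ht (S N)) as Hmain.
  rewrite HLHS. apply Rmult_le_reg_r with (/ (2 * t)); [apply Rinv_0_lt_compat; lra|].
  apply Rmult_le_reg_r with (1 - 4 * a ^ 2 * t ^ 2 / 3); [lra|].
  replace (2 * t * energy (cc b) t (S N) * / (2 * t) * (1 - 4 * a ^ 2 * t ^ 2 / 3))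
    with (energy (cc b) t (S N) * (1 - 4 * a ^ 2 * t ^ 2 / 3)) by (field; lra).
  eapply Rle_trans; [exact Hmain|]. right. field. lra.
Qed.

Theorem corollary1 (b : nat -> Cx) (a r : R) :
  in_class_B b ->
  b 1%nat = RtoC a ->
  0 < a < 1 ->
  0 < r <= 1 / sqrt 3 ->
  forall N : nat,
    sum_f_R0 (fun k => INR (k + 2) * Cnorm (b (k + 2)%nat) ^ 2 * r ^ (2 * (k + 2))) N
    <= 3 * (9 - 4 * a ^ 2) ^ 2 / (64 * a ^ 4)
       * (- ln (1 - 4 * a ^ 2 * r ^ 2 / 3) - 4 * a ^ 2 * r ^ 2 / 3).
Proof.
  intros Hb Hb1 Ha Hr N. set (K0 := 3 * (9 - 4 * a ^ 2) ^ 2 / (64 * a ^ 4)).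
  set (c := fun k => INR (k + 2) * Cnorm (b (k + 2)%nat) ^ 2). set (m := fun k => (2 * (k + 2))%nat).
  assert (Hpos : forall t, 0 <= t <= r -> 1 - 4 * a ^ 2 * t ^ 2 / 3 > 0).
  { intros t Ht. assert (t ^ 2 <= 1 / 3) by (rewrite <- inv_sqrt3_sqr; apply pow_incr; lra). nra. }
  apply (le_of_deriv_le
    (fun t => sum_f_R0 (fun k => c k * t ^ m k) N)
    (fun t => K0 * (- ln (1 - 4 * a ^ 2 * t ^ 2 / 3) - 4 * a ^ 2 * t ^ 2 / 3))
    (fun t => sum_f_R0 (fun k => c k * (INR (m k) * t ^ pred (m k))) N)
    (fun t => K0 * (2 * (4 * a ^ 2 / 3) * t / (1 - 4 * a ^ 2 * t ^ 2 / 3) - 2 * (4 * a ^ 2 / 3) * t))).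
  - lra.
  -
    rewrite (sum_eq _ (fun _ => 0)) by (intros k _; unfold m; rewrite pow_i by lia; ring).
    rewrite sum_cte, pow_i by lia. replace (1 - 4 * a ^ 2 * 0 / 3) with 1 by field.
    rewrite ln_1. lra.
  - intros t _. apply deriv_poly_sum.
  - intros t Ht. now apply deriv_log_majorant, Hpos.
  - intros t Ht. apply deriv_comparison; auto. lra.
Qed.
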